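(* Let $k=1$ and let $\mathcal{X}=\{\boldsymbol{x}_i\}_{i=1}^n\subset\mathbb{R}^d$ be a dataset all of whose points have unit Euclidean norm, so that $\mathcal{S}=\{\mathcal{X}\}$ is the single cluster. Let $\boldsymbol{c}=\mathrm{tm}(t,\mathcal{X})$ and $\overline{\phi}(t,\mathcal{S},\mathcal{C})=\frac1t\log\frac1n\sum_{i=1}^n e^{t\|\boldsymbol{x}_i-\boldsymbol{c}\|^2}$ with $\mathcal{C}=\{\boldsymbol{c}\}$. Then for any $t\ge0$, $$\frac{\partial\overline{\phi}(t,\mathcal{S},\mathcal{C})}{\partial t}\ge0.$$
   Context: The tilted mean operator: $\boldsymbol{c}=\mathrm{tm}(t,\mathcal{X})$ denotes the point $\boldsymbol{c}\in\mathbb{R}^d$ satisfying $\sum_{i=1}^n e^{t\|\boldsymbol{x}_i-\boldsymbol{c}\|^2}(\boldsymbol{x}_i-\boldsymbol{c})=0$. At $t=0$ the tilted SSE is defined as its limit, the ordinary SSE $\frac1n\sum_{i=1}^n\|\boldsymbol{x}_i-\boldsymbol{c}\|^2$. *)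

From HB Require Import structures.
From mathcomp Require Import all_boot all_order all_algebra.
From mathcomp Require Import all_classical all_reals all_analysis.
Set Implicit Arguments. Unset Strict Implicit. Unset Printing Implicit Defensive.
Import Order.TTheory GRing.Theory Num.Theory.
Local Open Scope ring_scope.

Definition sqnorm (R : realType) (d : nat) (v : 'rV[R]_d) : R :=
  \sum_(j < d) (v 0 j) ^+ 2.

Definition enorm (R : realType) (d : nat) (v : 'rV[R]_d) : R :=
  Num.sqrt (sqnorm v).

Definition is_tilted_mean (R : realType) (n d : nat) (t : R)
    (X : 'I_n -> 'rV[R]_d) (c : 'rV[R]_d) : Prop :=
  \sum_(i < n) expR (t * sqnorm (X i - c)) *: (X i - c) = 0.

(* tilted SSE  phibar(t, S, C) = (1/t) log (1/n) sum_i e^{t ||x_i - c||^2},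
   with its limit, the ordinary SSE (1/n) sum ||x_i - c||^2, at t = 0 *)
Definition tilted_sse (R : realType) (n d : nat) (t : R)
    (X : 'I_n -> 'rV[R]_d) (c : 'rV[R]_d) : R :=
  if t == 0 then (n%:R)^-1 * \sum_(i < n) sqnorm (X i - c)
  else t^-1 * ln ((n%:R)^-1 * \sum_(i < n) expR (t * sqnorm (X i - c))).

(* f has derivative D at t, relative to the domain t >= 0
   (a one-sided derivative at t = 0, the ordinary one for t > 0). *)
Definition has_deriv_nonneg (R : realType) (f : R -> R) (t D : R) : Prop :=
  forall eps : R, 0 < eps -> exists2 delta : R, 0 < delta &
    forall s : R, 0 <= s -> s != t -> `|s - t| < delta ->
      `|(f s - f t) / (s - t) - D| < eps.

(** For every [t] the tilted mean [c t] minimises [c' |-> sum_i exp (t |x_i - c'|^2)]: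
    the stationarity equation makes [c t] the weighted least-squares centre for the
    weights [exp (t |x_i - c t|^2)], and [exp] lies above its tangents.  Hence for
    [t <= s] we have [phibar(t, c t) <= phibar(t, c s) <= phibar(s, c s)], the second
    step being the monotonicity in [t] of the log-mean-exp [t^-1 ln (mean (exp (t a)))]
    (power-mean inequality, with Jensen's inequality at [t = 0]). *)

From HB Require Import structures.
From mathcomp Require Import all_boot all_order all_algebra.
From mathcomp Require Import all_classical all_reals all_analysis.
From mathcomp Require Import ring lra.
Set Implicit Arguments. Unset Strict Implicit. Unset Printing Implicit Defensive.
Import Order.TTheory GRing.Theory Num.Theory.
Local Open Scope ring_scope.

Lemma ln_ge_of_expR_le (R : realType) (x y : R) : expR x <= y -> x <= ln y.
Proof.
move=> le_exy; have y_gt0 : 0 < y by apply: lt_le_trans le_exy; exact: expR_gt0.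
by rewrite -ler_expR lnK // posrE.
Qed.

Lemma expR_bernoulli (R : realType) (p w : R) :
  1 <= p -> p * expR w <= expR (p * w) + p - 1.
Proof.
move=> p_ge1; have p_gt0 : 0 < p by apply: lt_le_trans p_ge1.
have pV_ge0 : 0 <= p^-1 by rewrite invr_ge0 ltW.
have pV_le1 : p^-1 <= 1 by rewrite invf_le1.
(* convexity of [expR] between [p * w] and [0], at the point [w] *)
have := @convex_expR R (Itv01 pV_ge0 pV_le1) (p * w) 0.
rewrite !convRE /= /unstable.onem mulr0 addr0 mulrA mulVf ?gt_eqF // mul1r expR0 mulr1.
move=> le_exp; have := ler_wpM2l (ltW p_gt0) le_exp.
by rewrite mulrDr mulrA mulfV ?gt_eqF // mul1r mulrBr mulr1 mulfV ?gt_eqF // addrA.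
Qed.

Section LogMeanExp.
Variables (R : realType) (n : nat).
Hypothesis n_gt0 : (0 < n)%N.

Definition mean (a : 'I_n -> R) : R := (n%:R)^-1 * \sum_(i < n) a i.

Definition log_mean_exp (a : 'I_n -> R) (t : R) : R :=
  t^-1 * ln (mean (fun i => expR (t * a i))).

Let n_gt0R : 0 < n%:R :> R. Proof. by rewrite ltr0n. Qed.

Lemma sumr_gt0 (a : 'I_n -> R) : (forall i, 0 < a i) -> 0 < \sum_(i < n) a i.
Proof.
move=> a_gt0; rewrite (bigD1 (Ordinal n_gt0)) //=.
by rewrite ltr_pwDl // sumr_ge0 // => i _; exact: ltW.
Qed.

Lemma mean_gt0 (a : 'I_n -> R) : (forall i, 0 < a i) -> 0 < mean a.
Proof. by move=> a_gt0; rewrite mulr_gt0 ?invr_gt0 ?sumr_gt0. Qed.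

Lemma sum_sub_mean (a : 'I_n -> R) : \sum_(i < n) (a i - mean a) = 0.
Proof.
rewrite sumrB sumr_const card_ord /mean -[_ *+ n]mulr_natr mulrAC mulVf ?gt_eqF //.
by rewrite mul1r subrr.
Qed.

Lemma expR_mean_le (a : 'I_n -> R) : expR (mean a) <= mean (fun i => expR (a i)).
Proof.
set m := mean a.
have tangent i : expR m * (1 + (a i - m)) <= expR (a i).
  have -> : expR (a i) = expR (a i - m) * expR m by rewrite -expRD subrK.
  by rewrite mulrC ler_wpM2r ?expR_ge0 ?expR_ge1Dx.
have : \sum_(i < n) expR m * (1 + (a i - m)) <= \sum_(i < n) expR (a i).
  by apply: ler_sum => i _; exact: tangent.
rewrite -mulr_sumr big_split /= sum_sub_mean addr0 sumr_const card_ord.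
by rewrite /mean ler_pdivlMl // mulrC mulr_natl.
Qed.

Lemma expR_mean_pow_le (w : 'I_n -> R) (p : R) : 1 <= p ->
  expR (p * ln (mean (fun i => expR (w i)))) <= mean (fun i => expR (p * w i)).
Proof.
move=> p_ge1.
have M_gt0 : 0 < mean (fun i => expR (w i)) by apply: mean_gt0 => i; exact: expR_gt0.
set L := ln _.
(* [expR (w i - L)] has mean 1; apply Bernoulli's inequality to each term *)
have mean1 : \sum_(i < n) expR (w i - L) = n%:R.
  under eq_bigr do rewrite expRB.
  rewrite -mulr_suml /L lnK ?posrE // /mean invfM invrK mulrA mulrAC.
  by rewrite mulfV ?mul1r // gt_eqF // sumr_gt0 // => i; exact: expR_gt0.
have : \sum_(i < n) p * expR (w i - L) <= \sum_(i < n) (expR (p * (w i - L)) + p - 1).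
  by apply: ler_sum => i _; exact: expR_bernoulli.
rewrite -mulr_sumr mean1.
under [X in _ <= X]eq_bigr do rewrite -addrA mulrBr expRB.
rewrite big_split /= sumr_const card_ord -mulr_suml -mulr_natr => le_sum.
rewrite /mean ler_pdivlMl // -ler_pdivlMr ?expR_gt0 //; nra.
Qed.

Lemma mean_le_log_mean_exp (a : 'I_n -> R) (s : R) :
  0 < s -> mean a <= log_mean_exp a s.
Proof.
move=> s_gt0; rewrite /log_mean_exp ler_pdivlMl //.
apply: ln_ge_of_expR_le; apply: le_trans (expR_mean_le _).
by rewrite /mean -mulr_sumr mulrCA.
Qed.

Lemma log_mean_exp_le (a : 'I_n -> R) (t s : R) :
  0 < t -> t <= s -> log_mean_exp a t <= log_mean_exp a s.
Proof.
move=> t_gt0 le_ts; have s_gt0 : 0 < s by apply: lt_le_trans le_ts.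
have p_ge1 : 1 <= s / t by rewrite ler_pdivlMr // mul1r.
have := expR_mean_pow_le (fun i => t * a i) p_ge1.
have -> : (fun i => expR (s / t * (t * a i))) = (fun i => expR (s * a i)).
  by apply/funext => i; rewrite mulrA divfK ?gt_eqF.
have sV_ge0 : 0 <= s^-1 by rewrite invr_ge0 ltW.
move=> /ln_ge_of_expR_le le_ln; have := ler_wpM2l sV_ge0 le_ln.
by rewrite !mulrA mulVf ?gt_eqF ?mul1r.
Qed.

Lemma log_mean_exp_le_of_sum (a b : 'I_n -> R) (t : R) : 0 < t ->
  \sum_(i < n) expR (t * a i) <= \sum_(i < n) expR (t * b i) ->
  log_mean_exp a t <= log_mean_exp b t.
Proof.
move=> t_gt0 le_ab; rewrite /log_mean_exp ler_pM2l ?invr_gt0 //.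
by rewrite ler_ln ?posrE ?mean_gt0 /mean ?ler_pM2l ?invr_gt0 // => i; exact: expR_gt0.
Qed.

End LogMeanExp.

Section WeightedLeastSquares.
Variables (R : realType) (n d : nat).

Lemma sqnorm_ge0 (v : 'rV[R]_d) : 0 <= sqnorm v.
Proof. by rewrite sumr_ge0 // => j _; exact: sqr_ge0. Qed.

Lemma sqnorm_subr_split (x c c' : 'rV[R]_d) :
  sqnorm (x - c') =
  sqnorm (x - c) + 2 * \sum_(j < d) (x - c) 0 j * (c - c') 0 j + sqnorm (c - c').
Proof.
rewrite /sqnorm mulr_sumr -!big_split /=; apply: eq_bigr => j _.
by rewrite !mxE; ring.
Qed.

Lemma weighted_sqnorm_le (w : 'I_n -> R) (X : 'I_n -> 'rV[R]_d) (c c' : 'rV[R]_d) :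
  (forall i, 0 <= w i) -> \sum_(i < n) w i *: (X i - c) = 0 ->
  \sum_(i < n) w i * sqnorm (X i - c) <= \sum_(i < n) w i * sqnorm (X i - c').
Proof.
move=> w_ge0 stationary.
have cross : \sum_(i < n) w i * (2 * \sum_(j < d) (X i - c) 0 j * (c - c') 0 j) = 0.
  under eq_bigr do rewrite mulrCA mulr_sumr.
  rewrite -mulr_sumr exchange_big /= big1 ?mulr0 // => j _.
  transitivity ((\sum_(i < n) w i *: (X i - c)) 0 j * (c - c') 0 j).
    by rewrite summxE mulr_suml; apply: eq_bigr => i _; rewrite [in RHS]mxE mulrA.
  by rewrite stationary !mxE mul0r.
under [X in _ <= X]eq_bigr do rewrite (sqnorm_subr_split _ c) !mulrDr.
rewrite !big_split /= cross addr0 lerDl.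
by rewrite sumr_ge0 // => i _; rewrite mulr_ge0 ?sqnorm_ge0.
Qed.

Lemma centroid_sqnorm_le (X : 'I_n -> 'rV[R]_d) (c c' : 'rV[R]_d) :
  \sum_(i < n) (X i - c) = 0 ->
  \sum_(i < n) sqnorm (X i - c) <= \sum_(i < n) sqnorm (X i - c').
Proof.
move=> centroid; have := @weighted_sqnorm_le (fun=> 1) X c c' (fun=> ler01).
under eq_bigr do rewrite scale1r.
move=> /(_ centroid); under eq_bigr do rewrite mul1r.
by under [X in _ <= X]eq_bigr do rewrite mul1r.
Qed.

Lemma tilted_mean_sum_expR_le (t : R) (X : 'I_n -> 'rV[R]_d) (c c' : 'rV[R]_d) :
  0 <= t -> is_tilted_mean t X c ->
  \sum_(i < n) expR (t * sqnorm (X i - c)) <= \sum_(i < n) expR (t * sqnorm (X i - c')).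
Proof.
move=> t_ge0 tm_c.
set w := fun i => expR (t * sqnorm (X i - c)).
have tangent i : w i + t * (w i * (sqnorm (X i - c') - sqnorm (X i - c)))
                 <= expR (t * sqnorm (X i - c')).
  have -> : expR (t * sqnorm (X i - c')) =
            w i * expR (t * (sqnorm (X i - c') - sqnorm (X i - c))).
    by rewrite /w -expRD mulrBr addrCA subrr addr0.
  by rewrite mulrCA -[X in X + _]mulr1 -mulrDr ler_wpM2l ?expR_ge0 ?expR_ge1Dx.
apply: le_trans (ler_sum (index_enum _) (fun i _ => tangent i)).
rewrite big_split /= -mulr_sumr lerDl mulr_ge0 //.
under eq_bigr do rewrite mulrBr.
rewrite sumrB subr_ge0; apply: weighted_sqnorm_le => // i.
exact: expR_ge0.
Qed.

End WeightedLeastSquares.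

Lemma tilted_sse_tilted_mean_le (R : realType) (n d : nat) (X : 'I_n -> 'rV[R]_d)
    (c : R -> 'rV[R]_d) :
  (0 < n)%N -> (forall t : R, 0 <= t -> is_tilted_mean t X (c t)) ->
  forall t s : R, 0 <= t -> t <= s -> tilted_sse t X (c t) <= tilted_sse s X (c s).
Proof.
move=> n_gt0 tm_c t s t_ge0; rewrite le_eqVlt => /predU1P[-> //|lt_ts].
have s_gt0 : 0 < s by apply: le_lt_trans lt_ts.
set a := fun i => sqnorm (X i - c s).
have -> : tilted_sse s X (c s) = log_mean_exp a s by rewrite /tilted_sse gt_eqF.
have [->|t_neq0] := eqVneq t 0.
  apply: le_trans (mean_le_log_mean_exp n_gt0 a s_gt0).
  rewrite /tilted_sse eqxx ler_wpM2l ?invr_ge0 //.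
  apply: centroid_sqnorm_le; have := tm_c 0 (lexx 0); rewrite /is_tilted_mean.
  by under eq_bigr do rewrite mul0r expR0 scale1r.
have t_gt0 : 0 < t by rewrite lt_neqAle eq_sym t_neq0.
apply: le_trans (log_mean_exp_le n_gt0 a t_gt0 (ltW lt_ts)).
rewrite /tilted_sse (negbTE t_neq0); apply: log_mean_exp_le_of_sum => //.
exact: tilted_mean_sum_expR_le t_ge0 (tm_c t t_ge0).
Qed.

Lemma has_deriv_nonneg_ge0 (R : realType) (f : R -> R) (t D : R) :
  0 <= t -> (forall s, t < s -> f t <= f s) -> has_deriv_nonneg f t D -> 0 <= D.
Proof.
move=> t_ge0 f_nondecr f_deriv; rewrite leNgt; apply/negP => D_lt0.
have oppD_gt0 : 0 < - D by rewrite oppr_gt0.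
have [delta delta_gt0 near_t] := f_deriv _ oppD_gt0.
set s := t + delta / 2.
have lt_ts : t < s by rewrite ltrDl divr_gt0.
have dist_st : `|s - t| < delta by rewrite /s addrAC subrr add0r gtr0_norm ?divr_gt0 //; lra.
have quot_ge0 : 0 <= (f s - f t) / (s - t).
  by rewrite divr_ge0 // subr_ge0 ?f_nondecr ?ltW.
have := near_t s (ltW (le_lt_trans t_ge0 lt_ts)) (negbT (gt_eqF lt_ts)) dist_st.
move=> /(le_lt_trans (ler_norm _)); lra.
Qed.

Theorem theorem5 (R : realType) (n d : nat) (X : 'I_n -> 'rV[R]_d)
    (c : R -> 'rV[R]_d) :
  (0 < n)%N ->
  (forall i, enorm (X i) = 1) ->
  (forall t : R, 0 <= t -> is_tilted_mean t X (c t)) ->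
  forall t D : R, 0 <= t ->
    has_deriv_nonneg (fun s => tilted_sse s X (c s)) t D ->
    0 <= D.
Proof.
move=> n_gt0 _ tm_c t D t_ge0; apply: has_deriv_nonneg_ge0 => // s lt_ts.
by apply: tilted_sse_tilted_mean_le => //; exact: ltW.
Qed.
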